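(* Let $H$ be the three-dimensional Heisenberg group with the left-invariant metric $g$ (parameter $A>0$) and magnetic form $\Omega$ (parameter $B$) of the context, and let $\Gamma_1,\Gamma_2<H$ be cocompact lattices. Suppose that for some $E>|B|$ the manifolds $\Gamma_1\backslash H$ and $\Gamma_2\backslash H$ have the same marked magnetic length spectrum at energy $E$. Then $\Gamma_1\backslash H$ and $\Gamma_2\backslash H$ are isometric.
   Context: $H$ is the simply connected Lie group whose Lie algebra has basis $X,Y,Z$ with only nonzero bracket $[X,Y]=Z$. $g$ is the left-invariant metric with $\{X/\sqrt A,Y/\sqrt A,Z\}$ orthonormal; with $\{\alpha,\beta,\zeta\}$ the dual basis, $\Omega=d(B\zeta)=-B\alpha\wedge\beta$. Magnetic geodesics are curves with $\nabla_{\sigma'}\sigma'=F\sigma'$, $g(Fu,v)=\Omega(u,v)$; they have constant speed $E$ (energy). Each $\Gamma_i\backslash H$ carries the induced metric and magnetic form, and $\pi_1(\Gamma_i\backslash H)\cong\Gamma_i$, so free homotopy classes of closed curves correspond to conjugacy classes of $\Gamma_i$; an isomorphism $\phi:\Gamma_1\to\Gamma_2$ induces a bijection $\phi_*$ of free homotopy classes. For a free homotopy class $\mathcal C$, $L(\mathcal C;E)$ is the set of lengths of smoothly closed magnetic geodesics of energy $E$ in $\mathcal C$ (a closed magnetic geodesic of energy $E$ and period $\omega$ has length $E|\omega|$). The two manifolds have the same marked magnetic length spectrum at energy $E$ if there is an isomorphism $\phi:\Gamma_1\to\Gamma_2$ with $L(\phi_*\mathcal C;E)=L(\mathcal C;E)$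 for every nontrivial free homotopy class $\mathcal C$ of $\Gamma_1\backslash H$. *)

From Stdlib Require Import Reals.
From Coquelicot Require Import Coquelicot.
Open Scope R_scope.

(** Left-invariant fields: X = d/dx, Y = d/dy + x d/dz, Z = d/dz, and
    [X,Y] = Z is the only nonzero bracket. *)

Definition H : Type := (R * R * R)%type.
(* tangent vectors, in coordinates *)
Definition V : Type := (R * R * R)%type.

Definition cx (p : H) : R := fst (fst p).
Definition cy (p : H) : R := snd (fst p).
Definition cz (p : H) : R := snd p.

Definition hmul (p q : H) : H :=
  (cx p + cx q, cy p + cy q, cz p + cz q + cx p * cy q).
Definition hinv (p : H) : H :=
  (- cx p, - cy p, - cz p + cx p * cy p).
Definition hone : H := (0, 0, 0).

Definition hline (p : H) (s : R) (d : V) : H :=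
  (cx p + s * cx d, cy p + s * cy d, cz p + s * cz d).

Definition alpha (p : H) (u : V) : R := cx u.
Definition beta  (p : H) (u : V) : R := cy u.
Definition zeta  (p : H) (u : V) : R := cz u - cx p * cy u.

(** The left-invariant metric g with {X/sqrt A, Y/sqrt A, Z} orthonormal,
    i.e. g = A alpha^2 + A beta^2 + zeta^2. *)
Definition gmet (A : R) (p : H) (u v : V) : R :=
  A * (alpha p u * alpha p v + beta p u * beta p v) + zeta p u * zeta p v.

(** The magnetic form Omega = d(B zeta) = - B alpha /\ beta. *)
Definition Omega (B : R) (p : H) (u v : V) : R :=
  - B * (alpha p u * beta p v - alpha p v * beta p u).

Definition Dg (A : R) (p : H) (d u v : V) : R :=
  Derive (fun s => gmet A (hline p s d) u v) 0.

Definition curve_deriv (c c' : R -> V) : Prop :=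
  forall t, is_derive (fun s => cx (c s)) t (cx (c' t)) /\
            is_derive (fun s => cy (c s)) t (cy (c' t)) /\
            is_derive (fun s => cz (c s)) t (cz (c' t)).

(** Levi-Civita covariant acceleration, lowered with g (Christoffel symbols
    of the first kind):  g(nabla_{s'} s', w)
      = g(s'', w) + Gamma_{ij,l} s'^i s'^j w^l,
    Gamma_{ij,l} = 1/2 (d_i g_{jl} + d_j g_{il} - d_l g_{ij}). *)
Definition cov_acc_lowered (A : R) (p : H) (v1 v2 w : V) : R :=
  gmet A p v2 w + Dg A p v1 v1 w - / 2 * Dg A p w v1 v1.

(** Magnetic geodesic of energy E: nabla_{s'} s' = F s' with
    g(F u, v) = Omega(u, v), tested against every vector w (g is
    nondegenerate), and constant speed E. *)
Definition magnetic_geodesic (A B E : R) (sigma : R -> H) : Prop :=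
  exists sigma1 sigma2 : R -> V,
    curve_deriv sigma sigma1 /\ curve_deriv sigma1 sigma2 /\
    (forall t w, cov_acc_lowered A (sigma t) (sigma1 t) (sigma2 t) w
                 = Omega B (sigma t) (sigma1 t) w) /\
    (forall t, sqrt (gmet A (sigma t) (sigma1 t) (sigma1 t)) = E).

Definition sqnorm (p : H) : R := cx p ^ 2 + cy p ^ 2 + cz p ^ 2.

Definition subgroup (G : H -> Prop) : Prop :=
  G hone /\ (forall a b, G a -> G b -> G (hmul a b)) /\
  (forall a, G a -> G (hinv a)).

(** cocompact lattice: discrete subgroup with compact quotient G\H
    (equivalently, some closed ball K satisfies G K = H). *)
Definition cocompact_lattice (G : H -> Prop) : Prop :=
  subgroup G /\
  (exists eps, 0 < eps /\ forall g, G g -> sqnorm g < eps -> g = hone) /\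
  (exists r, forall p, exists g, G g /\ sqnorm (hmul g p) <= r).

Definition conj_in (G : H -> Prop) (d g : H) : Prop :=
  exists h, G h /\ d = hmul (hmul h g) (hinv h).

(** [in_length_spectrum A B E G g l]: l is the length of a smoothly closed
    magnetic geodesic of energy E in G\H in the free homotopy class
    corresponding to the conjugacy class of g in G.  Such a closed magnetic
    geodesic of period omega lifts to a magnetic geodesic sigma of H with
    sigma(t + omega) = d * sigma(t) for all t, d conjugate to g in G. *)
Definition in_length_spectrum (A B E : R) (G : H -> Prop) (g : H) (l : R)
  : Prop :=
  exists (sigma : R -> H) (omega : R) (d : H),
    magnetic_geodesic A B E sigma /\ G d /\ conj_in G d g /\
    (forall t, sigma (t + omega) = hmul d (sigma t)) /\
    l = E * Rabs omega.

Definition group_iso (G1 G2 : H -> Prop) (phi : H -> H) : Prop :=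
  (forall a, G1 a -> G2 (phi a)) /\
  (forall a b, G1 a -> G1 b -> phi (hmul a b) = hmul (phi a) (phi b)) /\
  (forall a b, G1 a -> G1 b -> phi a = phi b -> a = b) /\
  (forall c, G2 c -> exists a, G1 a /\ phi a = c).

Definition same_marked_magnetic_length_spectrum
    (A B E : R) (G1 G2 : H -> Prop) : Prop :=
  exists phi : H -> H, group_iso G1 G2 phi /\
    forall g, G1 g -> g <> hone ->
      forall l, in_length_spectrum A B E G1 g l <->
                in_length_spectrum A B E G2 (phi g) l.

(** Isometry of G1\H and G2\H (with the metrics induced by g): a
    diffeomorphism-level lift F : H -> H that is a bijection, differentiable
    with differential DF preserving g, and which maps G1-orbits exactly onto
    G2-orbits (so it descends to a bijection G1\H -> G2\H, which is then a
    Riemannian isometry of the induced metrics). *)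
Definition isometric_quotients (A : R) (G1 G2 : H -> Prop) : Prop :=
  exists (F : H -> H) (DF : H -> V -> V),
    (forall p q, F p = F q -> p = q) /\
    (forall q, exists p, F p = q) /\
    (forall p, filterdiff F (locally p) (DF p)) /\
    (forall p u v, gmet A (F p) (DF p u) (DF p v) = gmet A p u v) /\
    (forall p q, (exists g, G1 g /\ q = hmul g p) <->
                 (exists g', G2 g' /\ F q = hmul g' (F p))).

(* A magnetic geodesic of H has constant vertical velocity zeta, and its
   horizontal projection is a circle traversed with angular speed (B - zeta)/A,
   or a straight line when zeta = B.  If it closes up modulo a lattice element
   g with nonzero horizontal part g_h, it must be a line, and the energy
   relation A |v_h|^2 + B^2 = E^2 forces its period to be
   sqrt (A |g_h|^2 / (E^2 - B^2)); conversely such a line exists.  Hence the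
   marked spectrum determines |g_h|, and by polarization phi acts on
   horizontal parts by an orthogonal map O.  The vertical discrepancy between
   phi and the automorphism of H extending O is a real character of the
   lattice; it kills the (cyclic) center, so it is linear in g_h, i.e. it is
   absorbed by an inner automorphism.  Thus phi g = h Psi(g) h^-1 for an
   isometric automorphism Psi of H, and the isometry F q := h Psi(q) of H
   satisfies F (g q) = phi g F q, so it descends to the quotients. *)

From Stdlib Require Import Reals Lra Psatz ZArith Nsatz Classical.
From Coquelicot Require Import Coquelicot.
Open Scope R_scope.

Lemma H_ext (p q : H) : cx p = cx q -> cy p = cy q -> cz p = cz q -> p = q.
Proof. destruct p as [[? ?] ?], q as [[? ?] ?]; cbn; now intros -> -> ->. Qed.

Ltac heis_ring := apply H_ext; unfold hmul, hinv, hone, cx, cy, cz; simpl; ring.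

Lemma hmul1g a : hmul hone a = a.
Proof. heis_ring. Qed.

Lemma hmulgV a : hmul a (hinv a) = hone.
Proof. heis_ring. Qed.

Lemma hmulKg h x : hmul (hinv h) (hmul h x) = x.
Proof. heis_ring. Qed.

Lemma hmulIg h x y : hmul h x = hmul h y -> x = y.
Proof. intros e. now rewrite <- (hmulKg h x), e, hmulKg. Qed.

Definition vertical (p : H) : Prop := cx p = 0 /\ cy p = 0.
Definition hnorm (p : H) : R := cx p ^ 2 + cy p ^ 2.
Definition hdot (p q : H) : R := cx p * cx q + cy p * cy q.
Definition hdet (p q : H) : R := cx p * cy q - cy p * cx q.
Definition hcomm (p q : H) : H := hmul (hmul (hmul p q) (hinv p)) (hinv q).

Lemma hcommE p q : hcomm p q = (0, 0, hdet p q).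
Proof. unfold hcomm, hdet; heis_ring. Qed.

Lemma hconjE h p :
  hmul (hmul h p) (hinv h) = (cx p, cy p, cz p + hdet h p).
Proof. unfold hdet; heis_ring. Qed.

Lemma hnorm_eq0 p : hnorm p = 0 -> vertical p.
Proof. unfold hnorm, vertical; intros e; split; nra. Qed.

Lemma vertical_commute p x : vertical p -> hmul p x = hmul x p.
Proof. intros [hx hy]; apply H_ext; unfold hmul, cx, cy, cz in *; simpl; nra. Qed.

Lemma commute_hdet p x : hmul p x = hmul x p -> hdet p x = 0.
Proof. intros e%(f_equal cz); unfold hmul, hdet, cx, cy, cz in *; simpl in *; lra. Qed.

Lemma hdet_basis_vertical a b p :
  hdet a b <> 0 -> hdet p a = 0 -> hdet p b = 0 -> vertical p.
Proof.
  unfold hdet, vertical; intros hab ha hb.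
  split; apply (Rmult_eq_reg_l (cx a * cy b - cy a * cx b)); auto; rewrite Rmult_0_r; nsatz.
Qed.

Lemma hdot_basis_vertical a b p :
  hdet a b <> 0 -> hdot p a = 0 -> hdot p b = 0 -> vertical p.
Proof.
  unfold hdet, hdot, vertical; intros hab ha hb.
  split; apply (Rmult_eq_reg_l (cx a * cy b - cy a * cx b)); auto; rewrite Rmult_0_r; nsatz.
Qed.

Fixpoint hpow (g : H) (n : nat) : H :=
  match n with O => hone | S n => hmul g (hpow g n) end.

Definition hpowZ (g : H) (n : Z) : H :=
  if Z.leb 0 n then hpow g (Z.to_nat n) else hinv (hpow g (Z.to_nat (- n))).

Lemma hpowZ_in (G : H -> Prop) g n : subgroup G -> G g -> G (hpowZ g n).
Proof.
  intros (G1 & Gmul & Ginv) Gg.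
  assert (Gpow : forall k, G (hpow g k)) by (induction k; simpl; auto).
  unfold hpowZ; destruct (Z.leb 0 n); auto.
Qed.

Definition additive_on (G : H -> Prop) (f : H -> R) : Prop :=
  forall a b, G a -> G b -> f (hmul a b) = f a + f b.

Lemma additive_on_hinv (G : H -> Prop) f x :
  subgroup G -> additive_on G f -> G x -> f (hinv x) = - f x.
Proof.
  intros (G1 & _ & Ginv) Hf Gx.
  pose proof (Hf hone hone G1 G1) as e1; rewrite hmul1g in e1.
  pose proof (Hf x (hinv x) Gx (Ginv x Gx)) as e; rewrite hmulgV in e; lra.
Qed.

Lemma additive_on_hpowZ (G : H -> Prop) f g n :
  subgroup G -> additive_on G f -> G g -> f (hpowZ g n) = IZR n * f g.
Proof.
  intros SG Hf Gg; pose proof SG as (G1 & Gmul & Ginv).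
  assert (Gpow : forall k, G (hpow g k)) by (induction k; simpl; auto).
  assert (fpow : forall k, f (hpow g k) = INR k * f g).
  { induction k as [|k IH]; simpl hpow.
    - pose proof (Hf hone hone G1 G1) as e; rewrite hmul1g in e; simpl; lra.
    - rewrite Hf, IH, S_INR by auto; ring. }
  unfold hpowZ; destruct (Z.leb_spec 0 n).
  - now rewrite fpow, INR_IZR_INZ, Z2Nat.id.
  - rewrite (additive_on_hinv G), fpow, INR_IZR_INZ, Z2Nat.id, opp_IZR by (auto; lia); ring.
Qed.

(** * Discrete subgroups of R *)

Section DiscreteSubgroup.

Variable S : R -> Prop.
Hypothesis S0 : S 0.
Hypothesis S_sub : forall a b, S a -> S b -> S (a - b).
Variable rho : R.
Hypothesis rho_gt0 : 0 < rho.
Hypothesis S_discrete : forall s, S s -> s <> 0 -> rho <= Rabs s.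

Lemma subgroup_R_opp a : S a -> S (- a).
Proof. intros Sa; replace (- a) with (0 - a) by ring; auto. Qed.

Lemma subgroup_R_add a b : S a -> S b -> S (a + b).
Proof. intros Sa Sb; replace (a + b) with (a - - b) by ring; auto using subgroup_R_opp. Qed.

Lemma subgroup_R_zmul delta n : S delta -> S (IZR n * delta).
Proof.
  intros Sd.
  assert (Snat : forall k, S (INR k * delta)).
  { induction k; [now rewrite Rmult_0_l|].
    rewrite S_INR, Rmult_plus_distr_r, Rmult_1_l; auto using subgroup_R_add. }
  destruct (Z.le_gt_cases 0 n).
  - now rewrite <- (Z2Nat.id n), <- INR_IZR_INZ by lia.
  - replace (IZR n * delta) with (- (INR (Z.to_nat (- n)) * delta))
      by (rewrite INR_IZR_INZ, Z2Nat.id, opp_IZR by lia; ring).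
    auto using subgroup_R_opp.
Qed.

(* The least positive element is the supremum of the negated positive
   elements; discreteness makes it attained. *)
Lemma discrete_subgroup_min s0 : S s0 -> s0 <> 0 ->
  exists delta, 0 < delta /\ S delta /\ forall s, S s -> 0 < s -> delta <= s.
Proof.
  intros Ss0 s0_neq0.
  set (Q := fun x => S (- x) /\ 0 < - x).
  assert (Qbound : bound Q) by (exists 0; intros x [_ hx]; lra).
  assert (Qne : exists x, Q x).
  { exists (- Rabs s0); unfold Q; rewrite Ropp_involutive.
    split; [|now apply Rabs_pos_lt].
    destruct (Rle_dec 0 s0); [rewrite Rabs_pos_eq|rewrite Rabs_left]; auto using subgroup_R_opp with real. }
  destruct (completeness Q Qbound Qne) as [m [m_ub m_least]].
  assert (lower : forall s, S s -> 0 < s -> - m <= s).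
  { intros s Ss hs; enough (- s <= m) by lra.
    apply m_ub; split; rewrite ?Ropp_involutive; auto. }
  assert (approx : forall e, 0 < e -> exists s, S s /\ 0 < s < - m + e).
  { intros e he; apply NNPP; intros hno.
    enough (m <= m - e) by lra.
    apply m_least; intros x [Sx hx]; apply Rnot_lt_le; intros hlt.
    apply hno; exists (- x); split; [exact Sx | lra]. }
  exists (- m).
  assert (Sm : S (- m)).
  { apply NNPP; intros hno.
    destruct (approx rho rho_gt0) as (s1 & S1 & hs1).
    assert (- m < s1).
    { destruct (Rle_lt_or_eq_dec _ _ (lower s1 S1 (proj1 hs1))) as [|<-]; tauto. }
    destruct (approx (s1 + m)) as (s2 & S2 & hs2); [lra|].
    pose proof (lower s2 S2 (proj1 hs2)).
    pose proof (S_discrete (s1 - s2) (S_sub _ _ S1 S2)).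
    rewrite Rabs_pos_eq in *; lra. }
  split; [|split; [exact Sm | exact lower]].
  enough (m <= - rho) by lra.
  apply m_least; intros x [Sx hx].
  pose proof (S_discrete _ Sx) as h; rewrite Rabs_pos_eq in h; lra.
Qed.

Lemma discrete_subgroup_cyclic s0 : S s0 -> s0 <> 0 ->
  exists delta, 0 < delta /\ S delta /\
    forall s, S s -> exists n : Z, s = IZR n * delta.
Proof.
  intros Ss0 s0_neq0.
  destruct (discrete_subgroup_min s0 Ss0 s0_neq0) as (delta & d_gt0 & Sd & dmin).
  exists delta; split; [exact d_gt0|]; split; [exact Sd|].
  intros s Ss; exists (Zfloor (s / delta)).
  set (n := Zfloor (s / delta)).
  assert (Srem : S (s - IZR n * delta)) by auto using subgroup_R_zmul.
  destruct (Zfloor_bound (s / delta)) as [lo hi]; fold n in lo, hi.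
  apply Rmult_le_compat_r with (r := delta) in lo; [|lra].
  apply Rmult_lt_compat_r with (r := delta) in hi; [|lra].
  unfold Rdiv in lo, hi; rewrite Rmult_assoc, Rinv_l, Rmult_1_r in lo, hi by lra.
  destruct (Rle_lt_or_eq_dec 0 (s - IZR n * delta)) as [pos|]; [lra| |lra].
  pose proof (dmin _ Srem pos); lra.
Qed.

End DiscreteSubgroup.

(** * Lattices *)

Lemma lattice_horizontal_cover (G : H -> Prop) : cocompact_lattice G ->
  exists r, forall u v, exists g, G g /\ (cx g + u) ^ 2 + (cy g + v) ^ 2 <= r.
Proof.
  intros (_ & _ & r & cover); exists r; intros u v.
  destruct (cover (u, v, 0)) as (g & Gg & hg); exists g; split; [exact Gg|].
  unfold sqnorm, hmul, cx, cy, cz in *; simpl in *.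
  pose proof (pow2_ge_0 (snd g + 0 + fst (fst g) * v)); lra.
Qed.

(* Lattice points near (-3q, 0) and (0, -3q), with q^2 above the covering
   radius, span the plane. *)
Lemma lattice_hdet_neq0 (G : H -> Prop) : cocompact_lattice G ->
  exists a b, G a /\ G b /\ hdet a b <> 0.
Proof.
  intros HG; destruct (lattice_horizontal_cover G HG) as [r cover].
  set (q := sqrt (Rabs r) + 1).
  assert (q_gt0 : 0 < q) by (pose proof (sqrt_pos (Rabs r)); unfold q; lra).
  assert (r_lt : r < q ^ 2).
  { pose proof (sqrt_pos (Rabs r)); pose proof (sqrt_sqrt (Rabs r) (Rabs_pos r)).
    pose proof (Rle_abs r); unfold q; nra. }
  destruct (cover (3 * q) 0) as (a & Ga & ha).
  destruct (cover 0 (3 * q)) as (b & Gb & hb).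
  exists a, b; split; [exact Ga|]; split; [exact Gb|].
  assert (small : forall e f, e ^ 2 + f ^ 2 <= r -> - q < e < q /\ - q < f < q)
    by (intros e f h; split; split; nra).
  destruct (small _ _ ha) as [[] []]; destruct (small _ _ hb) as [[] []].
  assert (cy a * cx b < q ^ 2) by nra.
  unfold hdet; nra.
Qed.

Lemma lattice_centralizer_vertical (G : H -> Prop) p : cocompact_lattice G ->
  (forall x, G x -> hmul p x = hmul x p) -> vertical p.
Proof.
  intros HG central; destruct (lattice_hdet_neq0 G HG) as (a & b & Ga & Gb & hab).
  apply (hdet_basis_vertical a b); auto using commute_hdet.
Qed.

Lemma lattice_center_cyclic (G : H -> Prop) : cocompact_lattice G ->
  exists delta, 0 < delta /\ G (0, 0, delta) /\
    forall z, G (0, 0, z) -> exists n : Z, z = IZR n * delta.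
Proof.
  intros HG; destruct (lattice_hdet_neq0 G HG) as (a & b & Ga & Gb & hab).
  destruct HG as ((G1 & Gmul & Ginv) & (eps & eps_gt0 & discrete) & _).
  set (rho := Rmin 1 eps / 2).
  assert (rho_gt0 : 0 < rho) by (unfold rho; apply Rmin_case; lra).
  assert (rho_sq : rho * rho < eps) by (unfold rho; apply Rmin_case_strong; intros; nra).
  apply (discrete_subgroup_cyclic (fun z => G (0, 0, z)) G1) with (rho := rho) (s0 := hdet a b).
  - intros x y Gx Gy; replace (0, 0, x - y) with (hmul (0, 0, x) (hinv (0, 0, y))) by heis_ring.
    auto.
  - exact rho_gt0.
  - intros z Gz z_neq0; apply Rnot_lt_le; intros small; apply z_neq0.
    assert (near1 : sqnorm (0, 0, z) < eps)
      by (unfold sqnorm, cx, cy, cz; simpl; apply Rabs_def2 in small; nra).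
    exact (f_equal cz (discrete _ Gz near1)).
  - rewrite <- hcommE; unfold hcomm; auto.
  - exact hab.
Qed.

Lemma additive_on_hcomm (G : H -> Prop) f a b :
  subgroup G -> additive_on G f -> G a -> G b -> f (hcomm a b) = 0.
Proof.
  intros SG Hf Ga Gb; pose proof SG as (_ & Gmul & Ginv).
  unfold hcomm; rewrite !Hf, !(additive_on_hinv G) by auto; ring.
Qed.

Lemma subgroup_vertical : subgroup vertical.
Proof.
  unfold subgroup, vertical, hmul, hinv, hone, cx, cy; simpl.
  split; [|split]; [lra | intros a b [] [] | intros a []]; lra.
Qed.

Lemma hpowZ_vertical z n : hpowZ (0, 0, z) n = (0, 0, IZR n * z).
Proof.
  assert (Vz : vertical (0, 0, z)) by (split; reflexivity).
  assert (cz_add : additive_on vertical cz).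
  { intros p q [px _] _; unfold hmul, cz, cx in *; simpl; rewrite px; ring. }
  apply H_ext;
    [ rewrite (additive_on_hpowZ vertical cx)
    | rewrite (additive_on_hpowZ vertical cy)
    | rewrite (additive_on_hpowZ vertical cz) ];
    auto using subgroup_vertical; try (intros ? ? _ _; reflexivity); unfold cx, cy, cz; simpl; ring.
Qed.

Section LatticeCharacter.

Variable G : H -> Prop.
Hypothesis HG : cocompact_lattice G.
Variable f : H -> R.
Hypothesis f_add : additive_on G f.

Let SG : subgroup G := proj1 HG.
Let G_hpowZ g n : G g -> G (hpowZ g n) := hpowZ_in G g n SG.

(* The center of G is cyclic and contains the nontrivial commutator [a, b],
   on which every character vanishes. *)
Lemma lattice_additive_vertical z : G (0, 0, z) -> f (0, 0, z) = 0.
Proof.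
  destruct (lattice_hdet_neq0 G HG) as (a & b & Ga & Gb & hab).
  destruct (lattice_center_cyclic G HG) as (delta & _ & Gd & cyclic).
  assert (Gab : G (0, 0, hdet a b)).
  { rewrite <- hcommE; pose proof SG as (_ & Gmul & Ginv); unfold hcomm; auto. }
  assert (f_pow : forall n, f (0, 0, IZR n * delta) = IZR n * f (0, 0, delta)).
  { intros n; rewrite <- hpowZ_vertical; apply (additive_on_hpowZ G); auto. }
  assert (f_delta : f (0, 0, delta) = 0).
  { destruct (cyclic _ Gab) as [m hm].
    pose proof (additive_on_hcomm G f a b SG f_add Ga Gb) as e.
    rewrite hcommE, hm, f_pow in e.
    apply Rmult_integral in e as [m0|]; [|assumption].
    now rewrite hm, m0, Rmult_0_l in hab. }
  intros Gz; destruct (cyclic _ Gz) as [n ->]; rewrite f_pow, f_delta; ring.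
Qed.

(* For g in G, the commutators [g, a], [g, b], [a, b] are integer multiples
   n1, n2, m of the generator of the center, and g^m a^-n2 b^n1 is central
   by Cramer's rule. *)
Lemma lattice_additive_linear :
  exists l1 l2, forall g, G g -> f g = l1 * cx g + l2 * cy g.
Proof.
  pose proof SG as (G1 & Gmul & Ginv).
  destruct (lattice_hdet_neq0 G HG) as (a & b & Ga & Gb & hab).
  destruct (lattice_center_cyclic G HG) as (delta & d_gt0 & _ & cyclic).
  assert (Gcomm : forall x y, G x -> G y -> G (0, 0, hdet x y))
    by (intros; rewrite <- hcommE; unfold hcomm; auto).
  exists ((cy b * f a - cy a * f b) / hdet a b), ((cx a * f b - cx b * f a) / hdet a b).
  intros g Gg.
  destruct (cyclic _ (Gcomm g a Gg Ga)) as [n1 hn1].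
  destruct (cyclic _ (Gcomm g b Gg Gb)) as [n2 hn2].
  destruct (cyclic _ (Gcomm a b Ga Gb)) as [m hm].
  set (k := hmul (hmul (hpowZ g m) (hpowZ a (- n2))) (hpowZ b n1)).
  assert (Gk : G k) by (unfold k; auto using G_hpowZ).
  assert (rel : forall f', additive_on G f' ->
    delta * f' k = hdet a b * f' g - hdet g b * f' a + hdet g a * f' b).
  { intros f' f'_add; unfold k.
    rewrite !f'_add, !(additive_on_hpowZ G f'), hn1, hn2, hm, opp_IZR
      by auto using G_hpowZ; ring. }
  assert (k_vertical : vertical k).
  { split; apply (Rmult_eq_reg_l delta); try lra; rewrite Rmult_0_r;
      [rewrite (rel cx) | rewrite (rel cy)]; try (intros ? ? _ _; reflexivity);
      unfold hdet; ring. }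
  assert (fk : f k = 0).
  { replace k with (0, 0, cz k) in * by (apply H_ext; symmetry; apply k_vertical || reflexivity).
    now apply lattice_additive_vertical. }
  pose proof (rel f f_add) as e; rewrite fk, Rmult_0_r in e.
  apply (Rmult_eq_reg_l (hdet a b)); [|exact hab].
  field_simplify; [|exact hab].
  unfold hdet in *; lra.
Qed.

End LatticeCharacter.

(** * Magnetic geodesics *)

Lemma Dg_formula A p d u v :
  Dg A p d u v = - cx d * (cy u * zeta p v + cy v * zeta p u).
Proof.
  unfold Dg; apply is_derive_unique.
  unfold gmet, hline, alpha, beta, zeta, cx, cy, cz; simpl.
  auto_derive; auto; ring.
Qed.

Lemma cov_acc_lowered_Omega A B p v1 v2 w :
  cov_acc_lowered A p v1 v2 w - Omega B p v1 w =
    (A * cx v2 - (B - zeta p v1) * cy v1) * cx w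
  + (A * cy v2 + (B - zeta p v1) * cx v1) * cy w
  + (zeta p v2 - cx v1 * cy v1) * zeta p w.
Proof.
  unfold cov_acc_lowered; rewrite !Dg_formula.
  unfold gmet, Omega, alpha, beta, zeta; field.
Qed.

Lemma coframe_independent p c1 c2 c3 :
  (forall w, c1 * alpha p w + c2 * beta p w + c3 * zeta p w = 0) ->
  c1 = 0 /\ c2 = 0 /\ c3 = 0.
Proof.
  intros h; pose proof (h (1, 0, 0)); pose proof (h (0, 1, 0)); pose proof (h (0, 0, 1)).
  unfold alpha, beta, zeta, cx, cy, cz in *; simpl in *; nra.
Qed.

Lemma magnetic_equation_coords A B p v1 v2 :
  (forall w, cov_acc_lowered A p v1 v2 w = Omega B p v1 w) <->
  A * cx v2 = (B - zeta p v1) * cy v1 /\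
  A * cy v2 = - (B - zeta p v1) * cx v1 /\
  zeta p v2 = cx v1 * cy v1.
Proof.
  split.
  - intros eqn.
    assert (coeffs := coframe_independent p
      (A * cx v2 - (B - zeta p v1) * cy v1) (A * cy v2 + (B - zeta p v1) * cx v1)
      (zeta p v2 - cx v1 * cy v1)).
    destruct coeffs as (c1 & c2 & c3); [|lra].
    intros w; rewrite <- cov_acc_lowered_Omega, eqn; unfold alpha, beta; ring.
  - intros (ex & ey & ez) w.
    apply Rminus_diag_uniq; rewrite cov_acc_lowered_Omega, ex, ey, ez; ring.
Qed.

Lemma derive_zero_const (f : R -> R) :
  (forall t, is_derive f t 0) -> forall a b, f a = f b.
Proof.
  intros df a b.
  destruct (MVT_abs f (fun _ => 0) b a) as (c & hc & _).
  { intros c _; apply is_derive_Reals, df. }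
  rewrite Rabs_R0, Rmult_0_l in hc; apply Rabs_eq_0 in hc; lra.
Qed.

Lemma derive_const_affine (f : R -> R) v :
  (forall t, is_derive f t v) -> forall t, f t = f 0 + v * t.
Proof.
  intros df t.
  assert (e : f t - v * t = f 0 - v * 0).
  { apply (derive_zero_const (fun s => f s - v * s)); intros s.
    replace 0 with (v - v * 1) by ring; apply (is_derive_minus f (fun s => v * s)); [apply df | auto_derive; auto; ring]. }
  lra.
Qed.

Lemma derive_periodic_increment (f f' : R -> R) omega c :
  (forall t, is_derive f t (f' t)) -> (forall t, f (t + omega) = c + f t) ->
  forall t, f' (t + omega) = f' t.
Proof.
  intros df per t.
  assert (shifted : is_derive (fun s => f (s + omega)) t (f' (t + omega))).
  { replace (f' (t + omega)) with (1 * f' (t + omega)) by ring.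
    apply (is_derive_comp f (fun s => s + omega)); [apply df | auto_derive; auto]. }
  assert (translated : is_derive (fun s => f (s + omega)) t (f' t)).
  { apply (is_derive_ext (fun s => c + f s)); [intros s; now rewrite per|].
    replace (f' t) with (0 + f' t) by ring.
    apply (is_derive_plus (fun _ => c) f); [exact (is_derive_const c t) | apply df]. }
  apply is_derive_unique in shifted, translated; congruence.
Qed.

Section MagneticGeodesicPeriod.

Variables (A B E : R) (sigma : R -> H) (s1 s2 : R -> V).
Hypothesis A_gt0 : 0 < A.
Hypothesis sigma_deriv : curve_deriv sigma s1.
Hypothesis s1_deriv : curve_deriv s1 s2.
Hypothesis magnetic :
  forall t w, cov_acc_lowered A (sigma t) (s1 t) (s2 t) w = Omega B (sigma t) (s1 t) w.
Hypothesis speed : forall t, sqrt (gmet A (sigma t) (s1 t) (s1 t)) = E.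

Let equations t := proj1 (magnetic_equation_coords A B (sigma t) (s1 t) (s2 t)) (magnetic t).

Lemma vertical_velocity_const t : zeta (sigma t) (s1 t) = zeta (sigma 0) (s1 0).
Proof.
  apply (derive_zero_const (fun t => cz (s1 t) - cx (sigma t) * cy (s1 t))); intros s.
  destruct (equations s) as (_ & _ & ez); unfold zeta in ez.
  replace 0 with (cz (s2 s) - (cx (s1 s) * cy (s1 s) + cx (sigma s) * cy (s2 s))) by lra.
  apply (is_derive_minus (fun t => cz (s1 t)) (fun t => cx (sigma t) * cy (s1 t)));
    [apply s1_deriv|].
  apply (is_derive_mult (fun t => cx (sigma t))); [apply sigma_deriv | apply s1_deriv | exact Rmult_comm].
Qed.

(* The horizontal motion is a Larmor rotation with frequency k / A. *)
Let k := B - zeta (sigma 0) (s1 0).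

Lemma horizontal_momenta_const t :
  A * cx (s1 t) - k * cy (sigma t) = A * cx (s1 0) - k * cy (sigma 0) /\
  A * cy (s1 t) + k * cx (sigma t) = A * cy (s1 0) + k * cx (sigma 0).
Proof.
  split.
  - apply (derive_zero_const (fun t => A * cx (s1 t) - k * cy (sigma t))); intros s.
    destruct (equations s) as (ex & _ & _); rewrite vertical_velocity_const in ex.
    replace 0 with (A * cx (s2 s) - k * cy (s1 s)) by (unfold k; lra).
    apply (is_derive_minus (fun t => A * cx (s1 t)) (fun t => k * cy (sigma t)));
      apply is_derive_scal; [apply s1_deriv | apply sigma_deriv].
  - apply (derive_zero_const (fun t => A * cy (s1 t) + k * cx (sigma t))); intros s.
    destruct (equations s) as (_ & ey & _); rewrite vertical_velocity_const in ey.
    replace 0 with (A * cy (s2 s) + k * cx (s1 s)) by (unfold k; lra).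
    apply (is_derive_plus (fun t => A * cy (s1 t)) (fun t => k * cx (sigma t)));
      apply is_derive_scal; [apply s1_deriv | apply sigma_deriv].
Qed.

Variables (omega : R) (d : H).
Hypothesis period : forall t, sigma (t + omega) = hmul d (sigma t).

Lemma period_cx t : cx (sigma (t + omega)) = cx d + cx (sigma t).
Proof. now rewrite period. Qed.

Lemma period_cy t : cy (sigma (t + omega)) = cy d + cy (sigma t).
Proof. now rewrite period. Qed.

Lemma larmor_displacement : k * cx d = 0 /\ k * cy d = 0.
Proof.
  pose proof (derive_periodic_increment (fun t => cx (sigma t)) (fun t => cx (s1 t))
    omega (cx d) (fun t => proj1 (sigma_deriv t)) period_cx 0) as vx.
  pose proof (derive_periodic_increment (fun t => cy (sigma t)) (fun t => cy (s1 t))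
    omega (cy d) (fun t => proj1 (proj2 (sigma_deriv t))) period_cy 0) as vy.
  pose proof (horizontal_momenta_const omega) as [mx my].
  pose proof (period_cx 0); pose proof (period_cy 0).
  rewrite Rplus_0_l in *; simpl in vx, vy; split; nra.
Qed.

Lemma magnetic_period_length :
  hnorm d <> 0 -> omega ^ 2 * (E ^ 2 - B ^ 2) = A * hnorm d.
Proof.
  intros hd.
  assert (k0 : k = 0).
  { destruct larmor_displacement as [kx ky].
    apply Rmult_integral in kx as [|dx]; [assumption|].
    apply Rmult_integral in ky as [|dy]; [assumption|].
    exfalso; apply hd; unfold hnorm; rewrite dx, dy; ring. }
  assert (velocity : forall t, cx (s1 t) = cx (s1 0) /\ cy (s1 t) = cy (s1 0)).
  { intros t; destruct (horizontal_momenta_const t) as [mx my]; rewrite k0 in mx, my.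
    split; nra. }
  assert (dx : cx d = cx (s1 0) * omega).
  { pose proof (derive_const_affine (fun t => cx (sigma t)) (cx (s1 0))
      ltac:(intros t; rewrite <- (proj1 (velocity t)); apply sigma_deriv) omega).
    pose proof (period_cx 0); rewrite Rplus_0_l in *; lra. }
  assert (dy : cy d = cy (s1 0) * omega).
  { pose proof (derive_const_affine (fun t => cy (sigma t)) (cy (s1 0))
      ltac:(intros t; rewrite <- (proj2 (velocity t)); apply sigma_deriv) omega).
    pose proof (period_cy 0); rewrite Rplus_0_l in *; lra. }
  assert (energy : E ^ 2 = A * (cx (s1 0) ^ 2 + cy (s1 0) ^ 2) + B ^ 2).
  { rewrite <- (speed 0), pow2_sqrt; unfold gmet, alpha, beta.
    - replace (zeta (sigma 0) (s1 0)) with B by (unfold k in k0; lra); ring.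
    - nra. }
  unfold hnorm; rewrite dx, dy, energy; ring.
Qed.

End MagneticGeodesicPeriod.

Lemma magnetic_geodesic_period A B E sigma omega d :
  0 < A -> magnetic_geodesic A B E sigma ->
  (forall t, sigma (t + omega) = hmul d (sigma t)) ->
  hnorm d <> 0 -> omega ^ 2 * (E ^ 2 - B ^ 2) = A * hnorm d.
Proof.
  intros A_gt0 (s1 & s2 & D1 & D2 & magnetic & speed).
  exact (magnetic_period_length A B E sigma s1 s2 A_gt0 D1 D2 magnetic speed omega d).
Qed.

(* Helices whose vertical velocity zeta equals B: the Lorentz force then
   vanishes and the horizontal projection is a straight line. *)
Definition straight_geodesic (B x0 y0 u v : R) (t : R) : H :=
  (x0 + u * t, y0 + v * t, (B + x0 * v) * t + u * v * (t * t) / 2).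

Lemma straight_geodesic_magnetic A B E x0 y0 u v :
  0 <= E -> A * (u ^ 2 + v ^ 2) + B ^ 2 = E ^ 2 ->
  magnetic_geodesic A B E (straight_geodesic B x0 y0 u v).
Proof.
  intros E_ge0 energy.
  exists (fun t => (u, v, B + x0 * v + u * v * t)), (fun _ => (0, 0, u * v)).
  split; [|split; [|split]].
  - intros t; unfold straight_geodesic, cx, cy, cz; simpl.
    split; [|split]; auto_derive; auto; field.
  - intros t; unfold cx, cy, cz; simpl.
    split; [|split]; auto_derive; auto; ring.
  - intros t; apply magnetic_equation_coords.
    unfold straight_geodesic, zeta, cx, cy, cz; simpl.
    split; [|split]; ring.
  - intros t; rewrite <- (sqrt_pow2 E E_ge0), <- energy; f_equal.
    unfold straight_geodesic, gmet, alpha, beta, zeta, cx, cy, cz; simpl; ring.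
Qed.

(* The initial point (x0, y0) is chosen so that the vertical drift over one
   period is exactly cz g. *)
Lemma in_length_spectrum_exists A B E (G : H -> Prop) g :
  0 < A -> Rabs B < E -> G hone -> G g -> hnorm g <> 0 ->
  exists l, in_length_spectrum A B E G g l.
Proof.
  intros A_gt0 BE G1 Gg g_nonvert.
  assert (EB : 0 < E ^ 2 - B ^ 2) by (apply Rabs_def2 in BE; nra).
  assert (N_gt0 : 0 < hnorm g) by (unfold hnorm in *; nra).
  set (T := sqrt (A * hnorm g / (E ^ 2 - B ^ 2))).
  assert (T_gt0 : 0 < T) by (apply sqrt_lt_R0, Rdiv_lt_0_compat; nra).
  assert (T2 : T * T = A * hnorm g / (E ^ 2 - B ^ 2))
    by (apply sqrt_sqrt, Rlt_le, Rdiv_lt_0_compat; nra).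
  set (s := cz g - B * T - cx g * cy g / 2).
  set (sigma := straight_geodesic B (s * cy g / hnorm g) (- s * cx g / hnorm g)
                  (cx g / T) (cy g / T)).
  exists (E * T), sigma, T, g; split; [|split; [exact Gg|split; [|split]]].
  - apply straight_geodesic_magnetic; [pose proof (Rabs_pos B); lra|].
    replace (A * ((cx g / T) ^ 2 + (cy g / T) ^ 2)) with (A * hnorm g / (T * T))
      by (unfold hnorm; field; lra).
    rewrite T2; field; lra.
  - exists hone; split; [exact G1 | heis_ring].
  - intros t; unfold sigma, straight_geodesic, s; apply H_ext;
      unfold hmul, cx, cy, cz; simpl; unfold hnorm, cx, cy in *; field; lra.
  - now rewrite Rabs_pos_eq by lra.
Qed.

Lemma in_length_spectrum_hnorm A B E (G : H -> Prop) g l :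
  0 < A -> in_length_spectrum A B E G g l -> hnorm g <> 0 ->
  l ^ 2 * (E ^ 2 - B ^ 2) = E ^ 2 * (A * hnorm g).
Proof.
  intros A_gt0 (sigma & omega & d & geod & _ & (h & _ & ->) & period & ->) g_nonvert.
  assert (hnorm_conj : hnorm (hmul (hmul h g) (hinv h)) = hnorm g)
    by (rewrite hconjE; reflexivity).
  rewrite <- hnorm_conj in *.
  rewrite <- (magnetic_geodesic_period A B E sigma omega _ A_gt0 geod period g_nonvert).
  rewrite Rpow_mult_distr, pow2_abs; ring.
Qed.

(** * The marked length spectrum *)

Lemma group_iso_vertical (G1 G2 : H -> Prop) phi g :
  cocompact_lattice G1 -> cocompact_lattice G2 -> group_iso G1 G2 phi -> G1 g ->
  vertical (phi g) <-> vertical g.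
Proof.
  intros HG1 HG2 (Gphi & phi_mul & phi_inj & phi_onto) Gg; split; intros vert.
  - pose proof (proj1 HG1) as (_ & G1mul & _).
    apply (lattice_centralizer_vertical G1 g HG1); intros x Gx.
    apply phi_inj; auto.
    rewrite !phi_mul by auto; apply vertical_commute, vert.
  - apply (lattice_centralizer_vertical G2 (phi g) HG2); intros y Gy.
    destruct (phi_onto y Gy) as (x & Gx & <-).
    rewrite <- !phi_mul by auto; f_equal; apply vertical_commute, vert.
Qed.

Lemma same_spectrum_hnorm A B E (G1 G2 : H -> Prop) phi :
  0 < A -> Rabs B < E -> cocompact_lattice G1 -> cocompact_lattice G2 ->
  group_iso G1 G2 phi ->
  (forall g, G1 g -> g <> hone -> forall l,
     in_length_spectrum A B E G1 g l <-> in_length_spectrum A B E G2 (phi g) l) ->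
  forall g, G1 g -> hnorm (phi g) = hnorm g.
Proof.
  intros A_gt0 BE HG1 HG2 iso spectrum g Gg.
  destruct (Req_dec (hnorm g) 0) as [g_vert | g_nonvert].
  - destruct (proj2 (group_iso_vertical G1 G2 phi g HG1 HG2 iso Gg) (hnorm_eq0 g g_vert))
      as [px py].
    rewrite g_vert; unfold hnorm; rewrite px, py; ring.
  - assert (phig_nonvert : hnorm (phi g) <> 0).
    { intros e; apply g_nonvert.
      destruct (proj1 (group_iso_vertical G1 G2 phi g HG1 HG2 iso Gg) (hnorm_eq0 _ e))
        as [gx gy].
      unfold hnorm; rewrite gx, gy; ring. }
    assert (g_neq1 : g <> hone) by (intros ->; apply g_nonvert; unfold hnorm, hone, cx, cy; simpl; ring).
    destruct (in_length_spectrum_exists A B E G1 g A_gt0 BE (proj1 (proj1 HG1)) Gg g_nonvert)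
      as [l spec1].
    pose proof (proj1 (spectrum g Gg g_neq1 l) spec1) as spec2.
    pose proof (in_length_spectrum_hnorm A B E G1 g l A_gt0 spec1 g_nonvert) as e1.
    pose proof (in_length_spectrum_hnorm A B E G2 (phi g) l A_gt0 spec2 phig_nonvert) as e2.
    assert (0 < E ^ 2 * A) by (pose proof (Rabs_pos B); apply Rmult_lt_0_compat; nra).
    nra.
Qed.

Lemma hnorm_hmul x y : hnorm (hmul x y) = hnorm x + hnorm y + 2 * hdot x y.
Proof. unfold hnorm, hdot, hmul, cx, cy; simpl; ring. Qed.

Lemma hnorm_preserving_hdot (G1 : H -> Prop) phi :
  (forall a b, G1 a -> G1 b -> G1 (hmul a b)) ->
  (forall a b, G1 a -> G1 b -> phi (hmul a b) = hmul (phi a) (phi b)) ->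
  (forall g, G1 g -> hnorm (phi g) = hnorm g) ->
  forall x y, G1 x -> G1 y -> hdot (phi x) (phi y) = hdot x y.
Proof.
  intros G1mul phi_mul norm x y Gx Gy.
  pose proof (norm (hmul x y) (G1mul x y Gx Gy)) as e.
  rewrite phi_mul, !hnorm_hmul, norm, norm in e by auto; lra.
Qed.

Lemma orthogonal_2x2 o11 o12 o21 o22 :
  o11 * o11 + o21 * o21 = 1 -> o12 * o12 + o22 * o22 = 1 ->
  o11 * o12 + o21 * o22 = 0 ->
  exists D, D * D = 1 /\ o12 = - D * o21 /\ o22 = D * o11.
Proof.
  intros c1 c2 c12; exists (o11 * o22 - o12 * o21).
  split; [|split]; nsatz.
Qed.

Lemma hdet_sqr p q : hdet p q ^ 2 = hdot p p * hdot q q - hdot p q ^ 2.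
Proof. unfold hdet, hdot; ring. Qed.

Lemma hdot_triple x y z q : hdot (x, y, z) q = x * cx q + y * cy q.
Proof. reflexivity. Qed.

(* The linear map O sending a, b to f a, f b (columns o_ij by Cramer's rule)
   is orthogonal since f preserves the Gram matrix of a, b; and f g - O g is
   orthogonal to the basis f a, f b. *)
Lemma hdot_preserving_orthogonal (S : H -> Prop) (f : H -> H) a b :
  S a -> S b -> hdet a b <> 0 ->
  (forall x y, S x -> S y -> hdot (f x) (f y) = hdot x y) ->
  exists c s D, c * c + s * s = 1 /\ D * D = 1 /\
    forall g, S g -> cx (f g) = c * cx g - D * s * cy g /\
                     cy (f g) = s * cx g + D * c * cy g.
Proof.
  intros Sa Sb hab dot.
  pose proof (dot a a Sa Sa) as gaa; pose proof (dot a b Sa Sb) as gab;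
    pose proof (dot b b Sb Sb) as gbb.
  assert (fab : hdet (f a) (f b) <> 0).
  { intros e; apply (pow_nonzero (hdet a b) 2 hab).
    rewrite hdet_sqr, <- gaa, <- gab, <- gbb, <- hdet_sqr, e; ring. }
  set (i := / hdet a b).
  assert (hi : hdet a b * i = 1) by (unfold i; field; exact hab).
  set (o11 := (cy b * cx (f a) - cy a * cx (f b)) * i).
  set (o12 := (cx a * cx (f b) - cx b * cx (f a)) * i).
  set (o21 := (cy b * cy (f a) - cy a * cy (f b)) * i).
  set (o22 := (cx a * cy (f b) - cx b * cy (f a)) * i).
  assert (linear : forall g, S g -> cx (f g) = o11 * cx g + o12 * cy g /\
                                   cy (f g) = o21 * cx g + o22 * cy g).
  { intros g Sg.
    pose proof (dot g a Sg Sa); pose proof (dot g b Sg Sb).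
    assert (w_vert : vertical
      (cx (f g) - (o11 * cx g + o12 * cy g), cy (f g) - (o21 * cx g + o22 * cy g), 0)).
    { apply (hdot_basis_vertical (f a) (f b)); [exact fab | |];
        rewrite hdot_triple; unfold hdot, hdet, o11, o12, o21, o22 in *;
        clearbody i; nsatz. }
    destruct w_vert as [wx wy]; unfold cx at 1 in wx; unfold cy at 1 in wy; simpl in wx, wy.
    split; lra. }
  assert (orth : o11 * o11 + o21 * o21 = 1 /\ o12 * o12 + o22 * o22 = 1 /\
                 o11 * o12 + o21 * o22 = 0)
    by (unfold hdot, hdet, o11, o12, o21, o22 in *; clearbody i; split; [|split]; nsatz).
  destruct orth as (c1 & c2 & c12).
  destruct (orthogonal_2x2 o11 o12 o21 o22 c1 c2 c12) as (D & hD & e12 & e22).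
  exists o11, o21, D; split; [exact c1|]; split; [exact hD|].
  intros g Sg; rewrite (proj1 (linear g Sg)), (proj2 (linear g Sg)), e12, e22.
  split; ring.
Qed.

(** * Isometric automorphisms *)

(* In the coordinates (x, y, z - x y / 2), in which hmul is the
   Baker-Campbell-Hausdorff product, this is the linear map
   (x, y, w) |-> (c x - D s y, s x + D c y, D w). *)
Definition orth_aut (c s D : R) (p : H) : H :=
  (c * cx p - D * s * cy p, s * cx p + D * c * cy p,
   D * (cz p - cx p * cy p / 2)
   + (c * cx p - D * s * cy p) * (s * cx p + D * c * cy p) / 2).

Lemma orth_aut_hmul c s D p q : c * c + s * s = 1 -> D * D = 1 ->
  orth_aut c s D (hmul p q) = hmul (orth_aut c s D p) (orth_aut c s D q).
Proof.
  intros hcs hD; apply H_ext; unfold orth_aut, hmul, cx, cy, cz; simpl; try ring.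
  unfold Rdiv; assert (2 * / 2 = 1) by field; set (t := / 2) in *; clearbody t; nsatz.
Qed.

Lemma orth_aut_K c s D p : c * c + s * s = 1 -> D * D = 1 ->
  orth_aut c (- (D * s)) D (orth_aut c s D p) = p.
Proof.
  intros hcs hD; apply H_ext; unfold orth_aut, cx, cy, cz; simpl;
    unfold Rdiv; assert (2 * / 2 = 1) by field; set (t := / 2) in *; clearbody t; nsatz.
Qed.

Lemma cz_hmul p q : cz (hmul p q) = cz p + cz q + cx p * cy q.
Proof. reflexivity. Qed.

Lemma lattice_iso_orth_conj (G1 G2 : H -> Prop) phi c s D :
  cocompact_lattice G1 -> group_iso G1 G2 phi ->
  c * c + s * s = 1 -> D * D = 1 ->
  (forall g, G1 g -> cx (phi g) = cx (orth_aut c s D g) /\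
                     cy (phi g) = cy (orth_aut c s D g)) ->
  exists h, forall g, G1 g -> phi g = hmul (hmul h (orth_aut c s D g)) (hinv h).
Proof.
  intros HG (_ & phi_mul & _) hcs hD horizontal.
  set (tau := fun g => cz (phi g) - cz (orth_aut c s D g)).
  assert (tau_add : additive_on G1 tau).
  { intros a b Ga Gb; unfold tau.
    rewrite phi_mul, orth_aut_hmul by auto.
    destruct (horizontal a Ga) as [ax _]; destruct (horizontal b Gb) as [_ by_].
    rewrite !cz_hmul, ax, by_; ring. }
  destruct (lattice_additive_linear G1 HG tau tau_add) as (l1 & l2 & tau_lin).
  exists (l1 * s + D * l2 * c, - l1 * c + D * l2 * s, 0); intros g Gg.
  destruct (horizontal g Gg) as [gx gy]; pose proof (tau_lin g Gg) as gz; unfold tau in gz.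
  rewrite hconjE; apply H_ext; [exact gx | exact gy|]; simpl.
  replace (cz (phi g)) with (cz (orth_aut c s D g) + (l1 * cx g + l2 * cy g)) by lra.
  f_equal; unfold hdet, orth_aut, cx, cy; simpl; clear - hcs hD; nsatz.
Qed.

Lemma filterdiff_pair {U V W : NormedModule R_AbsRing} (f : U -> V) (g : U -> W) x lf lg :
  filterdiff f (locally x) lf -> filterdiff g (locally x) lg ->
  filterdiff (fun y => (f y, g y)) (locally x) (fun y => (lf y, lg y)).
Proof.
  intros df dg; apply (filterdiff_comp'_2 f g pair x lf lg pair df dg).
  apply (filterdiff_ext (fun t => t)); [now intros [] |].
  apply filterdiff_ext_lin with (fun t => t); [apply filterdiff_id | now intros []].
Qed.

Definition lin_form (a b e : R) (q : H) : R := a * cx q + b * cy q + e * cz q.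

Lemma is_linear_lin_form a b e : is_linear (lin_form a b e).
Proof.
  assert (scaled : forall k (l : H -> R), is_linear l -> is_linear (fun q => k * l q))
    by (intros k l hl; exact (is_linear_comp l _ hl (is_linear_scal_r k Rmult_comm))).
  assert (sum : forall l1 l2 : H -> R, is_linear l1 -> is_linear l2 ->
                  is_linear (fun q => l1 q + l2 q))
    by (intros l1 l2 h1 h2; exact (is_linear_comp _ _ (is_linear_prod l1 l2 h1 h2) is_linear_plus)).
  unfold lin_form, cx, cy, cz; repeat apply sum; apply scaled.
  - apply (is_linear_comp (fun t : H => fst t) fst); apply is_linear_fst.
  - apply (is_linear_comp (fun t : H => fst t) snd); [apply is_linear_fst | apply is_linear_snd].
  - apply is_linear_snd.
Qed.

Lemma filterdiff_affine (p : H) k a b e :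
  filterdiff (fun q => k + lin_form a b e q) (locally p) (lin_form a b e).
Proof.
  apply filterdiff_ext_lin with (fun u => 0 + lin_form a b e u); [|intros u; simpl; ring].
  exact (filterdiff_plus_fct _ _ _ _ (filterdiff_const k) (filterdiff_linear _ (is_linear_lin_form a b e))).
Qed.

Lemma filterdiff_quadratic (p : H) k a b e a1 b1 e1 a2 b2 e2 a3 b3 e3 a4 b4 e4 :
  filterdiff
    (fun q => k + lin_form a b e q + lin_form a1 b1 e1 q * lin_form a2 b2 e2 q + lin_form a3 b3 e3 q * lin_form a4 b4 e4 q)
    (locally p)
    (fun u => lin_form a b e u
       + (lin_form a1 b1 e1 u * lin_form a2 b2 e2 p + lin_form a1 b1 e1 p * lin_form a2 b2 e2 u)
       + (lin_form a3 b3 e3 u * lin_form a4 b4 e4 p + lin_form a3 b3 e3 p * lin_form a4 b4 e4 u)).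
Proof.
  pose proof (fun a b e => filterdiff_linear (F := locally p) _ (is_linear_lin_form a b e)) as dl.
  apply (filterdiff_plus_fct (fun q => k + lin_form a b e q + lin_form a1 b1 e1 q * lin_form a2 b2 e2 q));
    [apply (filterdiff_plus_fct (fun q => k + lin_form a b e q)); [apply filterdiff_affine|] |];
    apply (filterdiff_mult_fct (lin_form _ _ _) (lin_form _ _ _)); auto using Rmult_comm.
Qed.

Definition hmul_left_diff (h : H) (u : V) : V := (cx u, cy u, cz u + cx h * cy u).

Definition orth_aut_diff (c s D : R) (p : H) (u : V) : V :=
  (c * cx u - D * s * cy u, s * cx u + D * c * cy u,
   D * (cz u - (cx u * cy p + cx p * cy u) / 2)
   + ((c * cx u - D * s * cy u) * (s * cx p + D * c * cy p)
      + (c * cx p - D * s * cy p) * (s * cx u + D * c * cy u)) / 2).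

Lemma gmet_hmul_left A h q u v :
  gmet A (hmul h q) (hmul_left_diff h u) (hmul_left_diff h v) = gmet A q u v.
Proof. unfold gmet, alpha, beta, zeta, hmul, hmul_left_diff, cx, cy, cz; simpl; ring. Qed.

Lemma zeta_orth_aut c s D p u : c * c + s * s = 1 -> D * D = 1 ->
  zeta (orth_aut c s D p) (orth_aut_diff c s D p u) = D * zeta p u.
Proof.
  intros hcs hD; unfold zeta, orth_aut, orth_aut_diff, cx, cy, cz; simpl.
  unfold Rdiv; assert (2 * / 2 = 1) by field; set (t := / 2) in *; clearbody t; nsatz.
Qed.

Lemma gmet_orth_aut A c s D p u v : c * c + s * s = 1 -> D * D = 1 ->
  gmet A (orth_aut c s D p) (orth_aut_diff c s D p u) (orth_aut_diff c s D p v) = gmet A p u v.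
Proof.
  intros hcs hD; unfold gmet; rewrite !zeta_orth_aut by auto.
  unfold alpha, beta, orth_aut, orth_aut_diff, cx, cy; simpl; nsatz.
Qed.

Lemma filterdiff_hmul_orth_aut c s D h p :
  filterdiff (fun q => hmul h (orth_aut c s D q)) (locally p)
    (fun u => hmul_left_diff h (orth_aut_diff c s D p u)).
Proof.
  apply (filterdiff_ext (fun q =>
    ((cx h + lin_form c (- (D * s)) 0 q, cy h + lin_form s (D * c) 0 q),
     cz h + lin_form (cx h * s) (cx h * D * c) D q
     + lin_form (- D / 2) 0 0 q * lin_form 0 1 0 q
     + lin_form (c / 2) (- (D * s) / 2) 0 q * lin_form s (D * c) 0 q)));
    [intros q; unfold hmul, orth_aut, lin_form, cx, cy, cz; simpl; f_equal; [f_equal|]; field|].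
  eapply filterdiff_ext_lin.
  { apply filterdiff_pair; [apply filterdiff_pair|];
      [apply filterdiff_affine | apply filterdiff_affine | apply filterdiff_quadratic]. }
  intros u; unfold hmul_left_diff, orth_aut_diff, lin_form, cx, cy, cz; simpl; f_equal; [f_equal|]; field.
Qed.

Lemma isometric_quotients_of_conj A (G1 G2 : H -> Prop) phi c s D h :
  c * c + s * s = 1 -> D * D = 1 -> group_iso G1 G2 phi ->
  (forall g, G1 g -> phi g = hmul (hmul h (orth_aut c s D g)) (hinv h)) ->
  isometric_quotients A G1 G2.
Proof.
  intros hcs hD (Gphi & phi_mul & phi_inj & phi_onto) conj.
  set (F := fun q => hmul h (orth_aut c s D q)).
  assert (inv_cs : c * c + - (D * s) * - (D * s) = 1) by nsatz.
  assert (F_inj : forall p q, F p = F q -> p = q).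
  { intros p q e%hmulIg.
    now rewrite <- (orth_aut_K c s D p), <- (orth_aut_K c s D q), e. }
  assert (F_equivariant : forall g p, G1 g -> F (hmul g p) = hmul (phi g) (F p)).
  { intros g p Gg; unfold F; rewrite conj, orth_aut_hmul by auto; heis_ring. }
  exists F, (fun p u => hmul_left_diff h (orth_aut_diff c s D p u)).
  split; [exact F_inj|]; split; [|split; [|split]].
  - intros q; exists (orth_aut c (- (D * s)) D (hmul (hinv h) q)); unfold F.
    replace (orth_aut c s D) with (orth_aut c (- (D * - (D * s))) D) by (f_equal; nsatz).
    rewrite orth_aut_K by auto; heis_ring.
  - intros p; apply filterdiff_hmul_orth_aut.
  - intros p u v; unfold F; rewrite gmet_hmul_left; apply gmet_orth_aut; auto.
  - intros p q; split.
    + intros (g & Gg & ->); exists (phi g); auto.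
    + intros (g' & Gg' & e); destruct (phi_onto g' Gg') as (g & Gg & <-).
      exists g; split; [exact Gg|]; apply F_inj; rewrite F_equivariant; auto.
Qed.

Theorem theorem4p19 (A B : R) (G1 G2 : H -> Prop) :
  0 < A ->
  cocompact_lattice G1 -> cocompact_lattice G2 ->
  (exists E : R, Rabs B < E /\
     same_marked_magnetic_length_spectrum A B E G1 G2) ->
  isometric_quotients A G1 G2.
Proof.
  intros A_gt0 HG1 HG2 (E & BE & phi & iso & spectrum).
  pose proof iso as (_ & phi_mul & _ & _).
  pose proof (proj1 HG1) as (_ & G1mul & _).
  pose proof (same_spectrum_hnorm A B E G1 G2 phi A_gt0 BE HG1 HG2 iso spectrum) as norm.
  pose proof (hnorm_preserving_hdot G1 phi G1mul phi_mul norm) as dot.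
  destruct (lattice_hdet_neq0 G1 HG1) as (a & b & Ga & Gb & hab).
  destruct (hdot_preserving_orthogonal G1 phi a b Ga Gb hab dot)
    as (c & s & D & hcs & hD & horizontal).
  destruct (lattice_iso_orth_conj G1 G2 phi c s D HG1 iso hcs hD horizontal) as [h conj].
  exact (isometric_quotients_of_conj A G1 G2 phi c s D h hcs hD iso conj).
Qed.
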